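(* Let $a,b,c$ be positive numbers with $a<b<c$; set $c_0=c-\lfloor c/b\rfloor b$, $(c_0+a-b)_+=\max(c_0+a-b,0)$ and $c_0\wedge a=\min(c_0,a)$. Define $\lambda_{a,b,c}(t)=\lfloor c/b\rfloor b+b$ for $t\in[0,(c_0+a-b)_+)+a\mathbb Z$, $\lambda_{a,b,c}(t)=0$ for $t\in[(c_0+a-b)_+,c_0\wedge a)+a\mathbb Z$, $\lambda_{a,b,c}(t)=\lfloor c/b\rfloor b$ for $t\in[c_0\wedge a,a)+a\mathbb Z$; and $\tilde\lambda_{a,b,c}(t)=-\lfloor c/b\rfloor b-b$ for $t\in[c-(c_0+a-b)_+,c)+a\mathbb Z$, $\tilde\lambda_{a,b,c}(t)=0$ for $t\in[c-c_0\wedge a,c-(c_0+a-b)_+)+a\mathbb Z$, $\tilde\lambda_{a,b,c}(t)=-\lfloor c/b\rfloor b$ for $t\in[c-a,c-c_0\wedge a)+a\mathbb Z$. Then $$\mathcal S_{a,b,c}\cap\Big(\big([(c_0+a-b)_+,c_0\wedge a)\cup[c-c_0\wedge a,c-(c_0+a-b)_+)\big)+a\mathbb Z\Big)=\emptyset,$$ and for every $t\in\mathcal S_{a,b,c}$ and every $\mathbf x\in\mathcal B_b^0$ with $\mathbf M_{a,b,c}(t)\mathbf x=\mathbf 1$ one has $\mathbf x(\lambda)=1$ for $\lambda\in\{\lambda_{a,b,c}(t),0,\tilde\lambda_{a,b,c}(t)\}$ and $\mathbf x(\lambda)=0$ for all $\lambda\in b\mathbb Z$ with $\tilde\lambda_{a,b,c}(t)<\lambda<\lambda_{a,b,c}(t)$,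 $\lambda\ne0$.
   Context: For $a,b,c>0$ and $t\in\mathbb R$, $\mathbf M_{a,b,c}(t)=(\chi_{[0,c)}(t-\mu+\lambda))_{\mu\in a\mathbb Z,\lambda\in b\mathbb Z}$ is the infinite matrix with rows indexed by $a\mathbb Z$ and columns by $b\mathbb Z$, acting by $(\mathbf M_{a,b,c}(t)\mathbf x)(\mu)=\sum_{\lambda\in b\mathbb Z}\chi_{[0,c)}(t-\mu+\lambda)\mathbf x(\lambda)$. $\mathcal B_b$ is the set of vectors $(\mathbf x(\lambda))_{\lambda\in b\mathbb Z}$ with entries in $\{0,1\}$, and $\mathcal B_b^0=\{\mathbf x\in\mathcal B_b:\mathbf x(0)=1\}$. $\mathbf 1$ denotes the vector indexed by $a\mathbb Z$ all of whose entries are $1$. $\mathcal S_{a,b,c}=\{t\in\mathbb R:\mathbf M_{a,b,c}(t)\mathbf x=\mathbf 1\text{ for some }\mathbf x\in\mathcal B_b^0\}$. For $A\subset\mathbb R$, $A+a\mathbb Z=\{x+ak:x\in A,k\in\mathbb Z\}$. *)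

From Stdlib Require Import Reals Lra Lia ZArith.
Open Scope R_scope.

(* floor x, as the integer Int_part x (IZR (Int_part x) <= x < IZR (Int_part x) + 1) *)
Definition floorR (x : R) : R := IZR (Int_part x).

Definition chi (c s : R) : R :=
  if Rle_dec 0 s then (if Rlt_dec s c then 1 else 0) else 0.

(* A vector indexed by bZ is represented as x : Z -> R, x k = x(k b).
   B_b : entries in {0,1};  B_b^0 : additionally x(0) = 1. *)
Definition in_Bb (x : Z -> R) : Prop := forall k : Z, x k = 0 \/ x k = 1.
Definition in_Bb0 (x : Z -> R) : Prop := in_Bb x /\ x 0%Z = 1.

(* Entry mu = m a of M_{a,b,c}(t) x :
   sum over lambda = k b of chi_[0,c)(t - m a + k b) x(k b).
   All terms with k outside [lo, hi] vanish (for b, c > 0), where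
   lo = floor((m a - t)/b), hi = floor((m a - t + c)/b); so the sum is taken
   over this finite window, which is literally the (finite) series. *)
Definition Mx_entry (a b c t : R) (x : Z -> R) (m : Z) : R :=
  let lo := Int_part ((IZR m * a - t) / b) in
  let hi := Int_part ((IZR m * a - t + c) / b) in
  sum_f_R0 (fun j : nat =>
      chi c (t - IZR m * a + IZR (lo + Z.of_nat j) * b) * x (lo + Z.of_nat j)%Z)
    (Z.to_nat (hi - lo)).

Definition M_eq_one (a b c t : R) (x : Z -> R) : Prop :=
  forall m : Z, Mx_entry a b c t x m = 1.

Definition S_abc (a b c t : R) : Prop :=
  exists x : Z -> R, in_Bb0 x /\ M_eq_one a b c t x.

Definition in_shift (A : R -> Prop) (a t : R) : Prop :=
  exists k : Z, A (t - IZR k * a).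

Definition Ico (u v : R) (s : R) : Prop := u <= s /\ s < v.

Definition c0 (b c : R) : R := c - floorR (c / b) * b.
Definition posp (a b c : R) : R := Rmax (c0 b c + a - b) 0.
Definition minca (a b c : R) : R := Rmin (c0 b c) a.

Definition modR (t a : R) : R := t - floorR (t / a) * a.

(* lambda_{a,b,c}(t): t is in [r] + aZ with r = t mod a in [0,a);
   [0,a) is partitioned into [0,posp), [posp, minca), [minca, a). *)
Definition lam (a b c t : R) : R :=
  let r := modR t a in
  if Rlt_dec r (posp a b c) then floorR (c / b) * b + b
  else if Rlt_dec r (minca a b c) then 0
  else floorR (c / b) * b.

(* tilde lambda_{a,b,c}(t): t is in [c - a + r] + aZ with r = (t-(c-a)) mod a;
   [c-a,c) is partitioned into [c-a, c-minca), [c-minca, c-posp), [c-posp, c). *)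
Definition lamt (a b c t : R) : R :=
  let r := modR (t - (c - a)) a in
  if Rlt_dec (c - a + r) (c - minca a b c) then - (floorR (c / b) * b)
  else if Rlt_dec (c - a + r) (c - posp a b c) then 0
  else - (floorR (c / b) * b) - b.

From Stdlib Require Import Reals Lra Lia ZArith Classical.
Open Scope R_scope.

(* Row m of M_{a,b,c}(t) x = 1 says that, among the indices k
   with x(kb) = 1, exactly one has kb in the window [ma - t, ma - t + c)
   (entries are 0/1, so the row sum counts these indices).
   Write t = qa + r with 0 <= r < a.  Row q has window [-r, c - r), which
   contains 0; since x(0) = 1, 0 is the only one there.  The one of row q+1,
   in [a - r, a - r + c), therefore lies in [c - r, c - r + a), and since
   c = N b + c0 (N = floor(c/b), 0 <= c0 < b) and a < b this forces it to be
   N b (when c0 <= r) or N b + b (when r < c0 + a - b); every one strictly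
   between 0 and it would lie in one of the two windows, hence equal 0 or it.
   So r never falls in the gap [c0 + a - b, c0), which is the first claim,
   and the one found is lambda_{a,b,c}(t).  Rows q and q-1, written with
   t - (c - a) = qa + r, give symmetrically the ones to the left of 0.
   The file first proves the floor/summation facts, then the window
   description of a row, then the two one-sided analyses, then how they
   match the definitions of lambda and tilde-lambda, and finally the theorem. *)

Lemma Int_part_div_bounds (u b : R) : 0 < b ->
  IZR (Int_part (u / b)) * b <= u < IZR (Int_part (u / b)) * b + b.
Proof.
  intros hb. destruct (base_Int_part (u / b)) as [h1 h2].
  assert (u = u / b * b) by (field; lra).
  split; nra.
Qed.

Lemma IZR_mul_le_inv (i j : Z) (b : R) : 0 < b -> IZR i * b <= IZR j * b -> (i <= j)%Z.
Proof. intros hb h. apply le_IZR. nra. Qed.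

Lemma IZR_mul_lt_inv (i j : Z) (b : R) : 0 < b -> IZR i * b < IZR j * b -> (i < j)%Z.
Proof. intros hb h. apply lt_IZR. nra. Qed.

Lemma IZR_mul_eq_inv (i j : Z) (b : R) : 0 < b -> IZR i * b = IZR j * b -> i = j.
Proof. intros hb h. apply eq_IZR. nra. Qed.

(* A finite sum of nonnegative terms dominates any single term, and any two
   distinct terms; this is what makes a row sum equal to 1 forbid two ones. *)
Lemma sum_f_R0_ge_term (f : nat -> R) (N i : nat) :
  (forall n, 0 <= f n) -> (i <= N)%nat -> f i <= sum_f_R0 f N.
Proof.
  intros Hp. induction N as [|N IH]; intros Hi; simpl.
  - replace i with 0%nat by lia. lra.
  - destruct (Nat.eq_dec i (S N)) as [->|ne].
    + pose proof (cond_pos_sum f N Hp). lra.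
    + pose proof (IH ltac:(lia)). pose proof (Hp (S N)). lra.
Qed.

Lemma sum_f_R0_ge_two_terms (f : nat -> R) (N i j : nat) :
  (forall n, 0 <= f n) -> (i < j)%nat -> (j <= N)%nat -> f i + f j <= sum_f_R0 f N.
Proof.
  intros Hp Hij. induction N as [|N IH]; intros Hj; simpl.
  - lia.
  - destruct (Nat.eq_dec j (S N)) as [->|ne].
    + pose proof (sum_f_R0_ge_term f N i Hp ltac:(lia)). lra.
    + pose proof (IH ltac:(lia)). pose proof (Hp (S N)). lra.
Qed.

Lemma chi_cases (c s : R) :
  (0 <= s < c /\ chi c s = 1) \/ (~ (0 <= s < c) /\ chi c s = 0).
Proof.
  unfold chi. destruct (Rle_dec 0 s); [destruct (Rlt_dec s c)|];
    [left|right|right]; split; auto; lra.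
Qed.

(* kb lies in the window of row m, i.e. chi_[0,c)(t - ma + kb) = 1. *)
Definition in_window (a b c t : R) (m k : Z) : Prop :=
  IZR m * a - t <= IZR k * b < IZR m * a - t + c.

Section RowWindows.
Variables a b c t : R.
Variable x : Z -> R.
Hypothesis hb : 0 < b.
Hypothesis hx : in_Bb x.
Hypothesis hM : M_eq_one a b c t x.

Lemma row_term_nonneg (m lo : Z) (n : nat) :
  0 <= chi c (t - IZR m * a + IZR (lo + Z.of_nat n) * b) * x (lo + Z.of_nat n)%Z.
Proof.
  destruct (chi_cases c (t - IZR m * a + IZR (lo + Z.of_nat n) * b)) as [[_ ->]|[_ ->]];
    destruct (hx (lo + Z.of_nat n)%Z) as [-> | ->]; lra.
Qed.

Lemma window_in_sum_range (m k : Z) : in_window a b c t m k ->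
  (Int_part ((IZR m * a - t) / b) <= k <= Int_part ((IZR m * a - t + c) / b))%Z.
Proof.
  intros [h1 h2].
  destruct (Int_part_div_bounds (IZR m * a - t) b hb).
  destruct (Int_part_div_bounds (IZR m * a - t + c) b hb).
  split.
  - apply (IZR_mul_le_inv _ _ b hb). lra.
  - assert (k < Int_part ((IZR m * a - t + c) / b) + 1)%Z; [|lia].
    apply (IZR_mul_lt_inv _ _ b hb). rewrite plus_IZR. lra.
Qed.

(* Each window contains a one of x (otherwise the row sum would be 0). *)
Lemma window_has_one (m : Z) : exists k, x k = 1 /\ in_window a b c t m k.
Proof.
  apply NNPP. intros Hnone. pose proof (hM m) as H. unfold Mx_entry in H.
  rewrite sum_eq_R0 in H; [lra|].
  intros i _. set (k := (Int_part ((IZR m * a - t) / b) + Z.of_nat i)%Z).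
  destruct (hx k) as [e|e]; rewrite e; [ring|].
  destruct (chi_cases c (t - IZR m * a + IZR k * b)) as [[hk _]|[_ ->]]; [|ring].
  exfalso. apply Hnone. exists k. split; [auto|unfold in_window; lra].
Qed.

(* ... and only one (two would make the row sum at least 2). *)
Lemma window_one_unique (m k1 k2 : Z) : x k1 = 1 -> x k2 = 1 ->
  in_window a b c t m k1 -> in_window a b c t m k2 -> k1 = k2.
Proof.
  assert (no_two : forall k1 k2, x k1 = 1 -> x k2 = 1 ->
    in_window a b c t m k1 -> in_window a b c t m k2 -> (k1 < k2)%Z -> False).
  { intros i j ei ej wi wj lt.
    pose proof (window_in_sum_range m i wi) as ri.
    pose proof (window_in_sum_range m j wj) as rj.
    pose proof (hM m) as H. unfold Mx_entry in H.
    set (lo := Int_part ((IZR m * a - t) / b)) in *.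
    set (hi := Int_part ((IZR m * a - t + c) / b)) in *.
    pose proof (sum_f_R0_ge_two_terms _ (Z.to_nat (hi - lo))
      (Z.to_nat (i - lo)) (Z.to_nat (j - lo)) (row_term_nonneg m lo)
      ltac:(lia) ltac:(lia)) as Hsum.
    cbv beta in Hsum. rewrite !Z2Nat.id in Hsum by lia.
    replace (lo + (i - lo))%Z with i in Hsum by lia.
    replace (lo + (j - lo))%Z with j in Hsum by lia.
    unfold in_window in wi, wj. rewrite ei, ej in Hsum.
    destruct (chi_cases c (t - IZR m * a + IZR i * b)) as [[_ ci]|[ni _]]; [|lra].
    destruct (chi_cases c (t - IZR m * a + IZR j * b)) as [[_ cj]|[nj _]]; [|lra].
    rewrite ci, cj in Hsum. lra. }
  intros e1 e2 w1 w2.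
  destruct (Z.lt_total k1 k2) as [l|[l|l]]; auto; exfalso; eauto.
Qed.
End RowWindows.

Section OneSided.
Variables a b c : R.
Hypothesis ha : 0 < a.
Hypothesis hab : a < b.
Hypothesis hbc : b < c.

Lemma c0_bounds : 0 <= c0 b c < b.
Proof. destruct (Int_part_div_bounds c b ltac:(lra)). unfold c0, floorR. lra. Qed.

Lemma index_right_of_c (r : R) (k : Z) : 0 <= r < a ->
  c - r <= IZR k * b < c - r + a ->
  (k = (Int_part (c / b) + 1)%Z /\ r < c0 b c + a - b) \/
  (k = Int_part (c / b) /\ c0 b c <= r).
Proof.
  intros hr hk. pose proof c0_bounds. unfold c0, floorR in *.
  set (N := Int_part (c / b)) in *.
  assert (lo : (N - 1 < k)%Z) by (apply (IZR_mul_lt_inv _ _ b); rewrite ?minus_IZR; nra).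
  assert (hi : (k < N + 2)%Z) by (apply (IZR_mul_lt_inv _ _ b); rewrite ?plus_IZR; nra).
  destruct (Z.eq_dec k N) as [->|ne].
  - right. split; [reflexivity|nra].
  - left. assert (k = N + 1)%Z as -> by lia. rewrite plus_IZR in hk. split; [reflexivity|nra].
Qed.

Lemma index_left_of_minus_c (r : R) (k : Z) : 0 <= r < a ->
  - c - r <= IZR k * b < a - c - r ->
  (k = (- Int_part (c / b) - 1)%Z /\ b - c0 b c <= r) \/
  (k = (- Int_part (c / b))%Z /\ r < a - c0 b c).
Proof.
  intros hr hk. pose proof c0_bounds. unfold c0, floorR in *.
  set (N := Int_part (c / b)) in *.
  assert (lo : (- N - 2 < k)%Z)
    by (apply (IZR_mul_lt_inv _ _ b); rewrite ?minus_IZR, ?opp_IZR; nra).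
  assert (hi : (k < - N + 1)%Z)
    by (apply (IZR_mul_lt_inv _ _ b); rewrite ?plus_IZR, ?opp_IZR; nra).
  destruct (Z.eq_dec k (- N)) as [->|ne].
  - right. rewrite opp_IZR in hk. split; [reflexivity|nra].
  - left. assert (k = - N - 1)%Z as -> by lia.
    rewrite minus_IZR, opp_IZR in hk. split; [reflexivity|nra].
Qed.

Variable t : R.
Variable x : Z -> R.
Hypothesis hx : in_Bb0 x.
Hypothesis hM : M_eq_one a b c t x.

Lemma first_one_right (q : Z) (r : R) : t = IZR q * a + r -> 0 <= r < a ->
  exists k, x k = 1 /\
    ((k = (Int_part (c / b) + 1)%Z /\ r < c0 b c + a - b) \/
     (k = Int_part (c / b) /\ c0 b c <= r)) /\
    (forall k', x k' = 1 -> 0 < IZR k' * b < IZR k * b -> False).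
Proof.
  intros ht hr. destruct hx as [hB h0]. assert (hb : 0 < b) by lra.
  assert (w0 : in_window a b c t q 0) by (unfold in_window; simpl; nra).
  assert (only0 : forall k, x k = 1 -> in_window a b c t q k -> k = 0%Z)
    by (intros k ek wk; exact (window_one_unique a b c t x hb hB hM q k 0 ek h0 wk w0)).
  destruct (window_has_one a b c t x hB hM (q + 1)) as [k [ek wk]].
  unfold in_window in *. rewrite plus_IZR in wk.
  assert (kc : c - r <= IZR k * b).
  { apply Rnot_lt_le. intros l.
    assert (k = 0%Z) as -> by (apply only0; auto; nra). simpl in wk. nra. }
  exists k. split; [exact ek|]. split.
  - apply index_right_of_c; [exact hr|nra].
  - intros k' e' [l1 l2].
    destruct (Rlt_le_dec (IZR k' * b) (c - r)).
    + assert (k' = 0%Z) as -> by (apply only0; auto; nra). simpl in l1. lra.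
    + assert (k' = k) as -> by (apply (window_one_unique a b c t x hb hB hM (q + 1));
        auto; unfold in_window; rewrite plus_IZR; nra). lra.
Qed.

Lemma first_one_left (q : Z) (r : R) : t - (c - a) = IZR q * a + r -> 0 <= r < a ->
  exists k, x k = 1 /\
    ((k = (- Int_part (c / b) - 1)%Z /\ b - c0 b c <= r) \/
     (k = (- Int_part (c / b))%Z /\ r < a - c0 b c)) /\
    (forall k', x k' = 1 -> IZR k * b < IZR k' * b < 0 -> False).
Proof.
  intros ht hr. destruct hx as [hB h0]. assert (hb : 0 < b) by lra.
  assert (w0 : in_window a b c t q 0) by (unfold in_window; simpl; nra).
  assert (only0 : forall k, x k = 1 -> in_window a b c t q k -> k = 0%Z)
    by (intros k ek wk; exact (window_one_unique a b c t x hb hB hM q k 0 ek h0 wk w0)).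
  destruct (window_has_one a b c t x hB hM (q - 1)) as [k [ek wk]].
  unfold in_window in *. rewrite minus_IZR in wk.
  assert (kc : IZR k * b < a - c - r).
  { apply Rnot_le_lt. intros l.
    assert (k = 0%Z) as -> by (apply only0; auto; nra). simpl in wk. nra. }
  exists k. split; [exact ek|]. split.
  - apply index_left_of_minus_c; [exact hr|nra].
  - intros k' e' [l1 l2].
    destruct (Rle_lt_dec (a - c - r) (IZR k' * b)).
    + assert (k' = 0%Z) as -> by (apply only0; auto; nra). simpl in l2. lra.
    + assert (k' = k) as -> by (apply (window_one_unique a b c t x hb hB hM (q - 1));
        auto; unfold in_window; rewrite minus_IZR; nra). lra.
Qed.
End OneSided.

Lemma modR_spec (t a : R) : 0 < a ->
  t = IZR (Int_part (t / a)) * a + modR t a /\ 0 <= modR t a < a.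
Proof.
  intros ha. destruct (Int_part_div_bounds t a ha).
  unfold modR, floorR. split; [ring|lra].
Qed.

Lemma posp_spec (a b c : R) :
  0 <= posp a b c /\ c0 b c + a - b <= posp a b c /\
  (posp a b c = 0 \/ posp a b c = c0 b c + a - b).
Proof. unfold posp, Rmax. destruct (Rle_dec (c0 b c + a - b) 0); lra. Qed.

Lemma minca_spec (a b c : R) :
  minca a b c <= c0 b c /\ minca a b c <= a /\
  (minca a b c = c0 b c \/ minca a b c = a).
Proof. unfold minca, Rmin. destruct (Rle_dec (c0 b c) a); lra. Qed.

Section Profiles.
Variables a b c : R.
Hypothesis hab : a < b.

Lemma lam_from_right_one (t : R) (k : Z) : 0 <= modR t a ->
  (k = (Int_part (c / b) + 1)%Z /\ modR t a < c0 b c + a - b) \/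
  (k = Int_part (c / b) /\ c0 b c <= modR t a) ->
  lam a b c t = IZR k * b.
Proof.
  intros hr D. pose proof (posp_spec a b c). pose proof (minca_spec a b c).
  unfold lam, floorR.
  destruct D as [[-> h]|[-> h]]; rewrite ?plus_IZR;
    repeat match goal with |- context [Rlt_dec ?u ?v] => destruct (Rlt_dec u v) end; lra.
Qed.

Lemma lamt_from_left_one (t : R) (k : Z) : 0 <= modR (t - (c - a)) a ->
  (k = (- Int_part (c / b) - 1)%Z /\ b - c0 b c <= modR (t - (c - a)) a) \/
  (k = (- Int_part (c / b))%Z /\ modR (t - (c - a)) a < a - c0 b c) ->
  lamt a b c t = IZR k * b.
Proof.
  intros hr D. pose proof (posp_spec a b c). pose proof (minca_spec a b c).
  unfold lamt, floorR.
  destruct D as [[-> h]|[-> h]]; rewrite ?minus_IZR, ?opp_IZR;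
    repeat match goal with |- context [Rlt_dec ?u ?v] => destruct (Rlt_dec u v) end; lra.
Qed.

Lemma right_gap_in_period (s : R) :
  Ico (posp a b c) (minca a b c) s -> 0 <= s < a.
Proof. pose proof (posp_spec a b c). pose proof (minca_spec a b c). unfold Ico. lra. Qed.

Lemma left_gap_in_period (s : R) :
  Ico (c - minca a b c) (c - posp a b c) s -> 0 <= s - (c - a) < a.
Proof. pose proof (posp_spec a b c). pose proof (minca_spec a b c). unfold Ico. lra. Qed.

Lemma right_one_avoids_gap (r : R) (k : Z) :
  (k = (Int_part (c / b) + 1)%Z /\ r < c0 b c + a - b) \/
  (k = Int_part (c / b) /\ c0 b c <= r) ->
  ~ Ico (posp a b c) (minca a b c) r.
Proof.
  pose proof (posp_spec a b c). pose proof (minca_spec a b c).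
  unfold Ico. intros [[_ h]|[_ h]]; lra.
Qed.

Lemma left_one_avoids_gap (s : R) (k : Z) :
  (k = (- Int_part (c / b) - 1)%Z /\ b - c0 b c <= s - (c - a)) \/
  (k = (- Int_part (c / b))%Z /\ s - (c - a) < a - c0 b c) ->
  ~ Ico (c - minca a b c) (c - posp a b c) s.
Proof.
  pose proof (posp_spec a b c). pose proof (minca_spec a b c).
  unfold Ico. intros [[_ h]|[_ h]]; lra.
Qed.
End Profiles.

Theorem proposition3p6 (a b c : R) (ha : 0 < a) (hab : a < b) (hbc : b < c) :
  (forall t : R, S_abc a b c t ->
     ~ in_shift (fun s => Ico (posp a b c) (minca a b c) s \/
                          Ico (c - minca a b c) (c - posp a b c) s) a t)
  /\
  (forall (t : R) (x : Z -> R), S_abc a b c t -> in_Bb0 x -> M_eq_one a b c t x ->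
     (forall k : Z, IZR k * b = lam a b c t -> x k = 1) /\
     x 0%Z = 1 /\
     (forall k : Z, IZR k * b = lamt a b c t -> x k = 1) /\
     (forall k : Z, lamt a b c t < IZR k * b < lam a b c t -> k <> 0%Z -> x k = 0)).
Proof.
  assert (hb : 0 < b) by lra.
  split.
  - intros t [x [hx hM]] [q [Hgap|Hgap]].
    + destruct (first_one_right a b c ha hab hbc t x hx hM q (t - IZR q * a)
        ltac:(ring) (right_gap_in_period a b c _ Hgap)) as [k [_ [D _]]].
      exact (right_one_avoids_gap a b c _ _ D Hgap).
    + destruct (first_one_left a b c ha hab hbc t x hx hM q (t - IZR q * a - (c - a))
        ltac:(ring) (left_gap_in_period a b c _ Hgap)) as [k [_ [D _]]].
      exact (left_one_avoids_gap a b c _ _ D Hgap).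
  - intros t x _ hx hM.
    destruct (modR_spec t a ha) as [ht hr].
    destruct (modR_spec (t - (c - a)) a ha) as [ht' hr'].
    destruct (first_one_right a b c ha hab hbc t x hx hM _ _ ht hr) as [k1 [e1 [D1 U1]]].
    destruct (first_one_left a b c ha hab hbc t x hx hM _ _ ht' hr') as [k2 [e2 [D2 U2]]].
    rewrite (lam_from_right_one a b c hab t k1 (proj1 hr) D1),
      (lamt_from_left_one a b c hab t k2 (proj1 hr') D2).
    destruct hx as [hB h0].
    split; [|split; [exact h0|split]].
    + intros k e. rewrite (IZR_mul_eq_inv k k1 b hb e). exact e1.
    + intros k e. rewrite (IZR_mul_eq_inv k k2 b hb e). exact e2.
    + intros k [l1 l2] nz. destruct (hB k) as [e|e]; [exact e|exfalso].
      destruct (Rtotal_order (IZR k * b) 0) as [n|[n|n]].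
      * exact (U2 k e (conj l1 n)).
      * apply nz, (IZR_mul_eq_inv k 0 b hb). simpl. lra.
      * exact (U1 k e (conj n l2)).
Qed.
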